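(* Let $(X_v)_{v\in V}$ be a BN on the DAG $\mathcal G$ with states $\mathcal A$, let $f:\mathcal A\to\mathcal B$ and $U_v=f(X_v)$. Let $v\in V$ and $b_{pa(v)}\in\mathcal B^{pa(v)}$ be such that $f^{-1}(b_{pa(v)})$ consists of a single element $a_{pa(v)}\in\mathcal A^{pa(v)}$. Then for every $b_{nd^*(v)}\in\mathcal B^{nd^*(v)}$ with $b_{nd^*(v)}|_{pa(v)}=b_{pa(v)}$ and $\mathbb P(U_{nd(v)}=b_{nd(v)})>0$, $$\mathbb P(U_v=b_v\mid U_{nd(v)}=b_{nd(v)})=\mathbb P(U_v=b_v\mid U_{pa(v)}=b_{pa(v)}).$$
   Context: $\mathcal G=(V,E)$ is a finite DAG; $pa(v)$ is the set of parents of $v$; $nd(v)$ is the set of non-descendants of $v$ (vertices other than $v$ not reachable from $v$ by a directed path), $nd^*(v)=nd(v)\cup\{v\}$. A BN on $\mathcal G$ with states $\mathcal A$ (finite set) is a random vector $(X_v)_{v\in V}$ with values in $\mathcal A^V$ whose law factorises as $\mathbb P(X=x)=\prod_{v}\mathbb P(X_v=x_v\mid X_{pa(v)}=x_{pa(v)})$. $f:\mathcal A\to\mathcal B$ is a surjection onto a finite set, applied coordinatewise; $f^{-1}(b_W)\subseteq\mathcal A^W$ is the preimage of $b_W\in\mathcal B^W$; for $W'\subseteq W$, $b_{W'}=b_W|_{W'}$ is the restriction. $\mathbb P(U_W=b_W)$ is the joint probability of the coordinates in $W$. *)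

From mathcomp Require Import all_boot all_order all_algebra.
Set Implicit Arguments. Unset Strict Implicit. Unset Printing Implicit Defensive.
Import Order.TTheory GRing.Theory Num.Theory.
Local Open Scope ring_scope.

Section BN.
Variables (V : finType) (e : rel V).

(* e u v means there is a directed edge u -> v. *)
Definition dag : Prop := forall u v, e u v -> ~~ connect e v u.

(* parents, non-descendants (v excluded, since connect is reflexive), nd^* *)
Definition pa (v : V) : {set V} := [set u | e u v].
Definition nd (v : V) : {set V} := [set u | ~~ connect e v u].
Definition ndstar (v : V) : {set V} := v |: nd v.

Variables (R : realFieldType) (A : finType).

(* A law of the random vector (X_v)_v on A^V, as a probability mass function. *)
Definition is_pmf (p : {ffun V -> A} -> R) : Prop :=
  (forall x, 0 <= p x) /\ \sum_x p x = 1.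

(* P(X_W = x_W), where x_W is the restriction of x to W *)
Definition margX (p : {ffun V -> A} -> R) (W : {set V}) (x : {ffun V -> A}) : R :=
  \sum_(y : {ffun V -> A} | [forall w in W, y w == x w]) p y.

(* P(X_v = x_v | X_pa(v) = x_pa(v)) ; division by 0 gives 0 in MathComp *)
Definition condX (p : {ffun V -> A} -> R) (v : V) (x : {ffun V -> A}) : R :=
  margX p (v |: pa v) x / margX p (pa v) x.

Definition is_BN (p : {ffun V -> A} -> R) : Prop :=
  is_pmf p /\ forall x, p x = \prod_(v : V) condX p v x.

Variables (B : finType) (f : A -> B).

(* P(U_W = b_W) with U_v = f(X_v); b_W is the restriction of b to W. *)
Definition margU (p : {ffun V -> A} -> R) (W : {set V}) (b : {ffun V -> B}) : R :=
  \sum_(y : {ffun V -> A} | [forall w in W, f (y w) == b w]) p y.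

Definition condU (p : {ffun V -> A} -> R) (v : V) (W : {set V})
  (b : {ffun V -> B}) : R :=
  margU p (v |: W) b / margU p W b.

(* f^{-1}(b_W) consists of the single element a_W (assignments identified with
   their restrictions to W). *)
Definition preimage_singleton (W : {set V}) (b : {ffun V -> B}) (a : {ffun V -> A}) : Prop :=
  forall a' : {ffun V -> A},
    (forall w, w \in W -> f (a' w) = b w) <-> (forall w, w \in W -> a' w = a w).

End BN.

(* The marginal law of X on an ancestral set T (closed under taking parents)
   is the product over T of the conditional kernels P(X_u | X_pa(u)): summing
   out a vertex of the complement all of whose parents lie in T removes its
   kernel, which sums to 1.  Since nd(v) is ancestral and contains pa(v), this
   gives P(X_v = c, X_nd(v) = z) = P(X_v = c | X_pa(v) = z) P(X_nd(v) = z).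
   On the fibre of f over b the parents are forced to equal a, so summing over
   the fibre yields P(U_v = b_v, U_nd(v) = b) = k P(U_nd(v) = b) with
   k = sum_(f c = b_v) P(X_v = c | X_pa(v) = a); the same computation with pa(v)
   in place of nd(v) produces the same constant k. *)

From mathcomp Require Import all_boot all_order all_algebra.
Import Order.TTheory GRing.Theory Num.Theory.
Set Implicit Arguments. Unset Strict Implicit. Unset Printing Implicit Defensive.
Local Open Scope ring_scope.

Section Marginals.
Variables (V : finType) (R : realFieldType) (A : finType).
Variable p : {ffun V -> A} -> R.
Implicit Types (x y z : {ffun V -> A}) (W T : {set V}).

Definition agree W y x := [forall w in W, y w == x w].

Definition upd x (s : V) (c : A) : {ffun V -> A} :=
  [ffun u => if u == s then c else x u].

(* The representative of the class of [z] modulo agreement on [W]. *)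
Definition canon W (a0 z : {ffun V -> A}) : {ffun V -> A} :=
  [ffun u => if u \in W then z u else a0 u].

Lemma agreeP W y x : reflect {in W, y =1 x} (agree W y x).
Proof.
apply: (iffP forallP) => [H w Hw|H w]; last by apply/implyP => /H ->.
by move: (H w); rewrite Hw => /eqP.
Qed.

Lemma agree_setU1 W x y s c : s \notin W ->
  agree (s |: W) y (upd x s c) = agree W y x && (y s == c).
Proof.
move=> sW; apply/agreeP/andP => [H|[/agreeP H /eqP ys]].
  split; last by rewrite H ?setU11 // ffunE eqxx.
  apply/agreeP => w Hw; rewrite H ?ffunE ?in_setU1 ?Hw ?orbT //.
  by case: eqP => // ws; rewrite -ws Hw in sW.
move=> w; rewrite in_setU1 ffunE; case: eqP => [->|_] //=; exact: H.
Qed.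

Lemma margX_ext W x x' : {in W, x =1 x'} -> margX p W x = margX p W x'.
Proof.
by move=> xx'; apply: eq_bigl => y; apply/agreeP/agreeP => H w Hw; rewrite H ?xx'.
Qed.

Lemma margX_set0 x : margX p set0 x = \sum_y p y.
Proof. by apply: eq_bigl => y; apply/forallP => w; rewrite inE. Qed.

Lemma margX_setT x : margX p setT x = p x.
Proof.
rewrite /margX (eq_bigl (pred1 x)) ?big_pred1_eq // => y /=.
apply/forallP/eqP => [H|-> w]; last by rewrite eqxx implybT.
by apply/ffunP => w; move: (H w); rewrite in_setT => /eqP.
Qed.

Lemma margX_split_pred W x s (P : pred A) : s \notin W ->
  \sum_(y | agree W y x && P (y s)) p y
    = \sum_(c | P c) margX p (s |: W) (upd x s c).
Proof.
move=> sW; rewrite (partition_big (fun y => y s) P) => [|y /andP[]//].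
apply: eq_bigr => c Pc; apply: eq_bigl => y.
rewrite -[X in _ = X]/(agree _ y _) agree_setU1 //.
by case: eqP => [->|]; rewrite ?Pc ?andbT ?andbF.
Qed.

Lemma margX_split W x s : s \notin W ->
  margX p W x = \sum_c margX p (s |: W) (upd x s c).
Proof.
move=> sW; rewrite -margX_split_pred //.
by apply: eq_bigl => y; rewrite andbT.
Qed.

Section Nonnegative.
Hypothesis p_ge0 : forall y, 0 <= p y.

Lemma sum_forall_antitone (r : V -> {ffun V -> A} -> bool) W T :
  W \subset T ->
  \sum_(y | [forall w in T, r w y]) p y <= \sum_(y | [forall w in W, r w y]) p y.
Proof.
move=> sWT; rewrite [leLHS]big_mkcond [leRHS]big_mkcond /=.
apply: ler_sum => y _; case: ifP => [/forallP rT|_]; last by case: ifP.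
suff -> : [forall w in W, r w y] by [].
by apply/forallP => w; apply/implyP => Ww; move: (rT w); rewrite (subsetP sWT).
Qed.

Lemma margX_ge0 W x : 0 <= margX p W x.
Proof. exact: sumr_ge0. Qed.

Lemma margX_le W T x : W \subset T -> margX p T x <= margX p W x.
Proof. exact: sum_forall_antitone. Qed.

Lemma margX_eq0_sub W T x :
  W \subset T -> margX p W x = 0 -> margX p T x = 0.
Proof.
by move=> sWT W0; apply/eqP; rewrite eq_le margX_ge0 -W0 margX_le ?andbT.
Qed.

End Nonnegative.

Lemma partition_canon (F : {ffun V -> A} -> R) (P Q : pred {ffun V -> A}) W a0 :
  (forall y z, agree W y z -> P y = P z) ->
  \sum_(y | P y && Q y) F y =
  \sum_(z | (canon W a0 z == z) && P z) \sum_(y | agree W y z && Q y) F y.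
Proof.
move=> Plocal.
rewrite (partition_big (canon W a0) (fun z => canon W a0 z == z)); last first.
  by move=> y _ /=; apply/eqP/ffunP => u; rewrite !ffunE; case: ifP => // ->.
rewrite [X in _ = X]big_mkcondr /=; apply: eq_bigr => z /eqP zcanon.
have agree_canon y : (canon W a0 y == z) = agree W y z.
  apply/eqP/agreeP => [<- w Ww|yz]; first by rewrite ffunE Ww.
  by rewrite -zcanon; apply/ffunP => u; rewrite !ffunE; case: ifP => // /yz.
by case: ifP => Pz; [apply: eq_bigl | apply: big_pred0] => y;
  rewrite agree_canon; case yz: (agree W y z);
  rewrite ?andbT ?andbF //= (Plocal _ _ yz) Pz.
Qed.

End Marginals.

Section Ancestral.
Variables (V : finType) (e : rel V).
Implicit Types (T : {set V}) (u v w : V).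

Definition ancestral T := forall u w, u \in T -> e w u -> w \in T.

Lemma ancestral0 : ancestral set0.
Proof. by move=> u w; rewrite inE. Qed.

Lemma ancestral_setU1 T s : ancestral T -> pa e s \subset T -> ancestral (s |: T).
Proof.
move=> ancT paT u w; rewrite !in_setU1 => /predU1P[->|uT] wu.
  by rewrite (subsetP paT) ?orbT ?inE.
by rewrite (ancT u) ?orbT.
Qed.

Lemma ancestral_nd v : ancestral (nd e v).
Proof.
move=> u w; rewrite !inE => vu wu; apply: contra vu => vw.
exact: connect_trans vw (connect1 wu).
Qed.

Lemma notin_nd v : v \notin nd e v.
Proof. by rewrite inE connect0. Qed.

Hypothesis dag_e : dag e.

Lemma pa_sub_nd v : pa e v \subset nd e v.
Proof. by apply/subsetP => w; rewrite !inE => /dag_e. Qed.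

Lemma notin_pa v : v \notin pa e v.
Proof. by apply: contra (notin_nd v); apply: (subsetP (pa_sub_nd v)). Qed.

(* A vertex outside [T] with the fewest ancestors has all its parents in [T]. *)
Lemma exists_source_outside T : T != setT ->
  exists2 s, s \notin T & pa e s \subset T.
Proof.
move=> TnT; have [s0 s0T] : exists s0, s0 \notin T.
  apply/existsP; apply: contraNT TnT => /existsPn allT.
  by apply/eqP/setP => s; rewrite inE; apply/negbNE/allT.
have [s sT smin] :=
  arg_minnP (P := [pred s | s \notin T]) (fun s => #|[set w | connect e w s]|) s0T.
exists s => //; apply/subsetP => w; rewrite inE => ws; apply/negPn/negP => wT.
have := smin w wT; rewrite leqNgt => /negP; apply; apply: proper_card.
apply/properP; split.
  by apply/subsetP => u; rewrite !inE => uw; apply: connect_trans uw (connect1 ws).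
by exists s; rewrite !inE ?connect0 //; apply: dag_e.
Qed.

End Ancestral.

Section KernelProduct.
Variables (V : finType) (e : rel V) (R : realFieldType) (A : finType).
Hypothesis dag_e : dag e.
Variable k : V -> {ffun V -> A} -> R.
Hypothesis k_local :
  forall u (x x' : {ffun V -> A}), {in u |: pa e u, x =1 x'} -> k u x = k u x'.
Hypothesis k_normalized : forall u x, \sum_c k u (upd x u c) = 1.

Lemma margX_prod_kernels T x : ancestral e T ->
  margX (fun y => \prod_u k u y) T x = \prod_(u in T) k u x.
Proof.
move: {2}#|~: T| (leqnn #|~: T|) => n; elim: n T x => [|n IH] T x cardT ancT.
  have -> : T = setT.
    by apply/eqP; rewrite eqEsubset subsetT -setCS setCT subset0 -cards_eq0 -leqn0.
  by rewrite margX_setT; apply: eq_bigl => u; rewrite in_setT.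
have [->|TnT] := eqVneq T setT.
  by rewrite margX_setT; apply: eq_bigl => u; rewrite in_setT.
have [s sT paT] := exists_source_outside dag_e TnT.
have cardsT : (#|~: (s |: T)| <= n)%N.
  rewrite -ltnS; apply: leq_trans cardT; apply: proper_card; rewrite setCU.
  by apply/properP; split; [apply: subsetIr | exists s; rewrite !inE ?eqxx].
have k_upd c u : u \in T -> k u (upd x s c) = k u x.
  move=> uT; apply: k_local => w; rewrite ffunE; case: eqP => // -> /setU1P[su|sp].
    by rewrite su uT in sT.
  by rewrite inE in sp; rewrite (ancT u) in sT.
have margX_sT c : margX (fun y => \prod_u k u y) (s |: T) (upd x s c)
    = k s (upd x s c) * \prod_(u in T) k u x.
  rewrite IH ?(big_setU1 _ sT) //=; last exact: ancestral_setU1.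
  by rewrite (eq_bigr _ (k_upd c)).
rewrite (@margX_split _ R _ _ T x s sT) (eq_bigr _ (fun c _ => margX_sT c)).
by rewrite -mulr_suml k_normalized mul1r.
Qed.

End KernelProduct.

Section BayesNet.
Variables (V : finType) (e : rel V) (R : realFieldType) (A : finType).
Hypothesis dag_e : dag e.
Variable p : {ffun V -> A} -> R.
Implicit Types (x y z : {ffun V -> A}) (T : {set V}).

Lemma condX_ext v x x' : {in v |: pa e v, x =1 x'} -> condX e p v x = condX e p v x'.
Proof.
move=> xx'; rewrite /condX (margX_ext p xx'); congr (_ / _).
by apply: margX_ext => w w_pa; rewrite xx' // in_setU1 w_pa orbT.
Qed.

Lemma margX_pa_upd v x c : margX p (pa e v) (upd x v c) = margX p (pa e v) x.
Proof.
apply: margX_ext => w w_pa; rewrite ffunE; case: eqP => // wv.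
by rewrite wv (negbTE (notin_pa dag_e v)) in w_pa.
Qed.

Lemma condX_normalized v x :
  margX p (pa e v) x != 0 -> \sum_c condX e p v (upd x v c) = 1.
Proof.
move=> pa_n0; rewrite /condX; under eq_bigr => c _ do rewrite (margX_pa_upd v x c).
by rewrite -mulr_suml -margX_split ?notin_pa // divff.
Qed.

(* [condX] completed to a probability kernel where the parents have mass 0;
   the point mass at [y0 v] is an arbitrary choice. *)
Definition kern (y0 : {ffun V -> A}) v y : R :=
  if margX p (pa e v) y != 0 then condX e p v y else (y v == y0 v)%:R.

Variable y0 : {ffun V -> A}.

Lemma kern_local v x x' : {in v |: pa e v, x =1 x'} -> kern y0 v x = kern y0 v x'.
Proof.
move=> xx'; rewrite /kern (condX_ext xx') xx' ?setU11 //.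
by rewrite (@margX_ext _ _ _ p _ x x') // => w w_pa; rewrite xx' // in_setU1 w_pa orbT.
Qed.

Lemma kern_normalized v x : \sum_c kern y0 v (upd x v c) = 1.
Proof.
rewrite /kern; under eq_bigr => c _ do rewrite (margX_pa_upd v x c).
case pa_n0: (margX p (pa e v) x != 0); first exact: condX_normalized.
rewrite (bigD1 (y0 v)) //= ffunE eqxx eqxx big1 ?addr0 // => c cy0.
by rewrite ffunE eqxx (negbTE cy0).
Qed.

Hypothesis BN_p : is_BN e p.

(* [p] is dominated by the product of kernels and both have total mass 1. *)
Lemma BN_prod_kern y : p y = \prod_v kern y0 v y.
Proof.
have [[p_ge0 p_sum1] p_fact] := BN_p.
pose Q y := \prod_v kern y0 v y.
have kern_ge0 v x : 0 <= kern y0 v x.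
  by rewrite /kern; case: ifP => _; rewrite ?ler0n // divr_ge0 ?margX_ge0.
have p_le_Q x : p x <= Q x.
  rewrite p_fact; case: (pickP (fun v => margX p (pa e v) x == 0)) => [v /eqP pa0|pa_n0].
    rewrite (bigD1 v) //= /condX pa0 invr0 mulr0 mul0r.
    exact: prodr_ge0.
  by rewrite le_eqVlt; apply/orP; left; apply/eqP/eq_bigr => v _; rewrite /kern pa_n0.
have Q_sum1 : \sum_x Q x = 1.
  rewrite -(margX_set0 _ y0) (margX_prod_kernels dag_e kern_local kern_normalized).
    by rewrite big_set0.
  exact: ancestral0.
have /psumr_eq0P QpE : \sum_x (Q x - p x) = 0 by rewrite sumrB Q_sum1 p_sum1 subrr.
by apply/eqP; rewrite eq_sym -subr_eq0 QpE // => x _; rewrite subr_ge0.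
Qed.

Lemma margX_BN T x : ancestral e T -> margX p T x = \prod_(v in T) kern y0 v x.
Proof.
move=> ancT; rewrite -(margX_prod_kernels dag_e kern_local kern_normalized x ancT).
by apply: eq_bigr => y _; rewrite BN_prod_kern.
Qed.

End BayesNet.

Section Factorization.
Variables (V : finType) (e : rel V) (R : realFieldType) (A : finType).
Variables (p : {ffun V -> A} -> R) (v : V).
Implicit Types (z : {ffun V -> A}) (W : {set V}).

Section Nonnegative.
Hypothesis p_ge0 : forall y, 0 <= p y.

Lemma margX_setU1_pa0 W z : pa e v \subset W -> margX p (pa e v) z = 0 ->
  margX p (v |: W) z = condX e p v z * margX p W z.
Proof.
move=> paW pa0; rewrite !(margX_eq0_sub p_ge0 _ pa0) ?mulr0 //.
exact: subset_trans paW (subsetUr _ _).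
Qed.

Lemma margX_setU1_pa z : margX p (v |: pa e v) z = condX e p v z * margX p (pa e v) z.
Proof.
have [pa0|pa_n0] := eqVneq (margX p (pa e v) z) 0; first exact: margX_setU1_pa0.
by rewrite /condX divfK.
Qed.

End Nonnegative.

Lemma margX_setU1_ancestral N z : dag e -> is_BN e p ->
  ancestral e N -> pa e v \subset N -> v \notin N ->
  margX p (v |: N) z = condX e p v z * margX p N z.
Proof.
move=> dag_e BN_p ancN paN vN.
have [pa0|pa_n0] := eqVneq (margX p (pa e v) z) 0.
  by apply: margX_setU1_pa0 => //; case: BN_p => [[]].
rewrite !(margX_BN dag_e z BN_p) //; last exact: ancestral_setU1.
by rewrite (big_setU1 _ vN) /kern pa_n0.
Qed.

End Factorization.

Section Fibres.
Variables (V : finType) (e : rel V) (R : realFieldType) (A B : finType).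
Variables (f : A -> B) (p : {ffun V -> A} -> R) (v : V).
Variables (b : {ffun V -> B}) (a : {ffun V -> A}).
Implicit Types (y z : {ffun V -> A}) (W T : {set V}).

Lemma margU_le W T : (forall y, 0 <= p y) -> W \subset T ->
  margU f p T b <= margU f p W b.
Proof.
by move=> p_ge0; apply: (sum_forall_antitone p_ge0 (fun w y => f (y w) == b w)).
Qed.

Hypothesis a_fibre : preimage_singleton f (pa e v) b a.

(* Only the values of [X] on [pa v] enter [condX v] once [X_v] is fixed, and on
   the fibre over [b] these are forced to be [a]. *)
Lemma margU_setU1 W : pa e v \subset W -> v \notin W ->
  (forall z, margX p (v |: W) z = condX e p v z * margX p W z) ->
  margU f p (v |: W) b
    = (\sum_(c | f c == b v) condX e p v (upd a v c)) * margU f p W b.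
Proof.
move=> paW vW split_v.
pose fibW y := [forall w in W, f (y w) == b w].
have fibW_local y z : agree W y z -> fibW y = fibW z.
  by move=> /agreeP yz; apply: eq_forallb_in => w /yz ->.
have -> : margU f p (v |: W) b = \sum_(y | fibW y && (f (y v) == b v)) p y.
  apply: eq_bigl => y; rewrite andbC; apply/forallP/andP => [H|[yv /forallP yW] w].
    split; first by move: (H v); rewrite setU11.
    by apply/forallP => w; apply/implyP => Ww; move: (H w); rewrite in_setU1 Ww orbT.
  by rewrite in_setU1; case: eqP => [->|_] //=; apply: yW.
have -> : margU f p W b = \sum_(y | fibW y && true) p y.
  by apply: eq_bigl => y; rewrite andbT.
rewrite !(@partition_canon _ _ _ p fibW _ W a fibW_local) mulr_sumr.
apply: eq_bigr => z /andP[_ fibz].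
rewrite (@margX_split_pred _ R _ p W z v (fun c => f c == b v) vW) mulr_suml.
rewrite (eq_bigl (agree W ^~ z)) => [|y]; last by rewrite andbT.
apply: eq_bigr => c _; rewrite split_v.
have z_pa : {in pa e v, z =1 a}.
  apply/a_fibre => w w_pa; apply/eqP.
  by move/forallP: fibz => /(_ w); rewrite (subsetP paW).
congr (_ * _).
  by apply: condX_ext => w; rewrite !ffunE; case: eqP => [//|wv] /setU1P[//|/z_pa].
by apply: margX_ext => w Ww; rewrite ffunE; case: eqP => // wv; rewrite -wv Ww in vW.
Qed.

End Fibres.

Theorem mainTheorem3 (V : finType) (e : rel V) (R : realFieldType)
  (A B : finType) (f : A -> B) (p : {ffun V -> A} -> R) :
  dag e ->
  (forall y : B, exists x : A, f x = y) ->
  is_BN e p ->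
  forall (v : V) (b : {ffun V -> B}),
    (exists a : {ffun V -> A}, preimage_singleton f (pa e v) b a) ->
    0 < margU f p (nd e v) b ->
    condU f p v (nd e v) b = condU f p v (pa e v) b.
Proof.
move=> dag_e _ BN_p v b [a a_fibre] nd_pos.
have p_ge0 : forall y, 0 <= p y by case: BN_p => [[]].
have pa_nd := pa_sub_nd dag_e v.
have split_nd := margU_setU1 a_fibre pa_nd (@notin_nd _ e v)
  (fun z => margX_setU1_ancestral z dag_e BN_p (@ancestral_nd _ e v) pa_nd (@notin_nd _ e v)).
have split_pa := margU_setU1 a_fibre (subxx _) (notin_pa dag_e v) (margX_setU1_pa e v p_ge0).
have pa_pos : 0 < margU f p (pa e v) b := lt_le_trans nd_pos (margU_le f b p_ge0 pa_nd).
by rewrite /condU split_nd split_pa !mulfK ?gt_eqF.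
Qed.
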